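(* Let $\mathcal{X}$ be a finite channel input set with $|\mathcal{X}|=M=2^m$, let $\mathcal{Y}$ be the output set, and let $P_{Y|X}(y|x)$ be the transition density of a memoryless channel. Let $\mu:\mathbb{F}_2^m\to\mathcal{X}$ be a bijective labeling, and for $x\in\mathcal{X}$ and $j=1,\dots,m$ let $b_j(x)\in\{0,1\}$ be the $j$-th bit of the label of $x$. For $b\in\{0,1\}$ let $\mathcal{X}_b^j=\{x\in\mathcal{X}: b_j(x)=b\}$. Let $P_{B_1},\dots,P_{B_m}$ be probability distributions on $\{0,1\}$ and define $P_X^{\rm bicm}(x)=\prod_{j=1}^m P_{B_j}(b_j(x))$. Define the bit metrics $$q_j(b,y)=\sum_{x'\in\mathcal{X}_b^j}P_{Y|X}(y|x')P_X^{\rm bicm}(x'),$$ the symbol metric $q^{\rm bicm}(x,y)=\prod_{j=1}^m q_j(b_j(x),y)$, and the generalized mutual information $$R_{\rm gmi}=\sup_{s>0}\ \mathbb{E}\left[\log\frac{q^{\rm bicm}(X,Y)^s}{\sum_{x'\in\mathcal{X}}q^{\rm bicm}(x',Y)^sP_X^{\rm bicm}(x')}\right],$$ where the expectation is with respect to the joint distribution $P_X^{\rm bicm}(x)P_{Y|X}(y|x)$. Then $$R_{\rm gmi}=\sup_{s>0}\left(\sum_{j=1}^m\mathbb{E}\left[\log\frac{q_j(B_j,Y)^s}{\sum_{b'\in\{0,1\}}q_j(b',Y)^sP_{B_j}(b')}\right]\right),$$ where, for each $j$, the expectation is with respect to the joint distribution $P_{B_j}(b)P_j(y|b)$ with $$P_j(y|b)=\sum_{x\in\mathcal{X}_b^j}\frac{P_{Y|X}(y|x)P_X^{\rm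 bicm}(x)}{\sum_{x'\in\mathcal{X}_b^j}P_X^{\rm bicm}(x')}\quad(\text{for } b \text{ with } P_{B_j}(b)>0).$$ Equivalently, $$R_{\rm gmi}=\sup_{s>0}\left(\sum_{j=1}^m\mathbb{E}\left[\log\frac{q_j(b_j(X),Y)^s}{\sum_{b'\in\{0,1\}}q_j(b',Y)^sP_{B_j}(b')}\right]\right),$$ where the expectation is with respect to $P_X^{\rm bicm}(x)P_{Y|X}(y|x)$.
   Context: This is the setting of bit-interleaved coded modulation (BICM) with possibly non-equiprobable (''shaped'') bits: the $m$ label bits of each transmitted symbol are independent with distributions $P_{B_j}$, and the decoder uses the metric $q^{\rm bicm}$, which treats the bits as independent. Logarithms are natural. *)

From HB Require Import structures.
From mathcomp Require Import all_boot all_order all_algebra.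
From mathcomp Require Import all_classical all_reals all_analysis.
Set Implicit Arguments. Unset Strict Implicit. Unset Printing Implicit Defensive.
Import Order.TTheory GRing.Theory Num.Theory.
Local Open Scope ring_scope.

Section BICM.
Variables (R : realType) (m : nat) (X : finType).
Variables (d : measure_display) (Y : measurableType d).
Variable (mu : {measure set Y -> \bar R}).   (* reference measure on the output set *)
Variable (W : X -> Y -> R).                  (* transition density P_{Y|X}(y|x) w.r.t. mu *)
Variable (lab : X -> {ffun 'I_m -> bool}).   (* inverse labeling mu^{-1}: x |-> its label *)
Variable (PB : 'I_m -> bool -> R).

Definition bitj (j : 'I_m) (x : X) : bool := lab x j.

Definition PXbicm (x : X) : R := \prod_(j < m) PB j (bitj j x).

Definition qj (j : 'I_m) (b : bool) (y : Y) : R :=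
  \sum_(x' : X | bitj j x' == b) W x' y * PXbicm x'.

Definition qbicm (x : X) (y : Y) : R := \prod_(j < m) qj j (bitj j x) y.

Definition Pj (j : 'I_m) (b : bool) (y : Y) : R :=
  \sum_(x : X | bitj j x == b)
     (W x y * PXbicm x / \sum_(x' : X | bitj j x' == b) PXbicm x').

(* expectation of f(X,Y) w.r.t. P_X^bicm(x) P_{Y|X}(y|x) (density w.r.t. counting x mu) *)
Definition EXY (f : X -> Y -> R) : \bar R :=
  (\sum_(x : X) (PXbicm x)%:E * \int[mu]_y (W x y * f x y)%:E)%E.

Definition EBY (j : 'I_m) (g : bool -> Y -> R) : \bar R :=
  (\sum_(b : bool) (PB j b)%:E * \int[mu]_y (Pj j b y * g b y)%:E)%E.

Definition gmi_obj (s : R) : \bar R :=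
  EXY (fun x y => ln (qbicm x y `^ s /
                      \sum_(x' : X) qbicm x' y `^ s * PXbicm x')).

Definition R_gmi : \bar R :=
  ereal_sup [set gmi_obj s | s in [set s : R | 0 < s]].

Definition bit_ratio (j : 'I_m) (s : R) (b : bool) (y : Y) : R :=
  ln (qj j b y `^ s / \sum_(b' : bool) qj j b' y `^ s * PB j b').

Definition bitwise_obj (s : R) : \bar R :=
  (\sum_(j < m) EBY j (bit_ratio j s))%E.

Definition bitwise_obj_X (s : R) : \bar R :=
  (\sum_(j < m) EXY (fun x y => bit_ratio j s (bitj j x) y))%E.

End BICM.

From HB Require Import structures.
From mathcomp Require Import all_boot all_order all_algebra.
From mathcomp Require Import all_classical all_reals all_analysis.
From mathcomp Require Import measurable_realfun measurable_fun_approximation.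
From mathcomp Require Import lebesgue_integral ring lra.
Import Order.TTheory GRing.Theory Num.Theory.
Local Open Scope ring_scope.

(* The bit metrics make everything factor over the label bits: P_X^bicm is a
   product over j, and since lab is a bijection onto all labels, the sum over
   x' of q^bicm(x',y)^s P_X^bicm(x') is the product over j of the sums over b'
   of q_j(b',y)^s P_{B_j}(b').  Hence wherever P_X^bicm(x) P_{Y|X}(y|x) > 0 the
   GMI log-ratio is the sum over j of the bit log-ratios, which gives the second
   form (for every s).  The first form follows by grouping the sum over x
   according to b_j(x), using P_{B_j}(b) P_j(y|b) = sum_{b_j(x)=b} P_X^bicm(x)
   P_{Y|X}(y|x).
   The bit log-ratio for bit value b is bounded above by -ln P_{B_j}(b) but not
   below, so the integrals may be -oo: linearity is proved for functions whose
   positive part has finite integral. *)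

Lemma sube_rearrange (R : realType) (P N p1 n1 p2 n2 : \bar R) :
  (0 <= N -> 0 <= n1 -> 0 <= n2 -> P \is a fin_num -> p1 \is a fin_num ->
   p2 \is a fin_num ->
  P + n1 + n2 = N + p1 + p2 -> P - N = (p1 - n1) + (p2 - n2))%E.
Proof.
case: P => [P||] //; case: p1 => [p1||] //; case: p2 => [p2||] //.
case: N => [N||] //; case: n1 => [n1||] //; case: n2 => [n2||] //=.
by move=> _ _ _ _ _ _ [] PN; apply/eqP; rewrite eqe; apply/eqP; lra.
Qed.

Section positive_part_integrable.
Context {d : measure_display} {T : measurableType d} {R : realType}
  (mu : {measure set T -> \bar R}).
Implicit Types (f g w : T -> R).

Definition pos_integrable f := (\int[mu]_x (f^\+ x)%:E < +oo)%E.

Lemma integral_funrposneg f :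
  (\int[mu]_x (f x)%:E = \int[mu]_x (f^\+ x)%:E - \int[mu]_x (f^\- x)%:E)%E.
Proof. by rewrite [LHS]integralE funerpos funerneg. Qed.

Lemma measurable_EFin_funrpos f : measurable_fun setT f ->
  measurable_fun [set: T] (fun x => (f^\+ x)%:E : \bar R).
Proof. by move=> mf; apply/measurable_EFinP/measurable_funrpos. Qed.

Lemma measurable_EFin_funrneg f : measurable_fun setT f ->
  measurable_fun [set: T] (fun x => (f^\- x)%:E : \bar R).
Proof. by move=> mf; apply/measurable_EFinP/measurable_funrneg. Qed.

Lemma pos_integrable_fin_num f : pos_integrable f ->
  (\int[mu]_x (f^\+ x)%:E)%E \is a fin_num.
Proof.
by rewrite ge0_fin_numE //; apply: integral_ge0 => x _; rewrite lee_fin funrpos_ge0.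
Qed.

Lemma ge0_pos_integrable f : (forall x, 0 <= f x) ->
  (\int[mu]_x (f x)%:E < +oo)%E -> pos_integrable f.
Proof.
move=> f0; rewrite /pos_integrable; suff -> : f^\+ = f by [].
by apply/funext => x; rewrite /funrpos max_l.
Qed.

Lemma pos_integrable_le f g : measurable_fun setT f -> measurable_fun setT g ->
  (forall x, f x <= g x) -> pos_integrable g -> pos_integrable f.
Proof.
move=> mf mg fg pg; apply: le_lt_trans pg; apply: ge0_le_integral => //.
- by move=> x _; rewrite lee_fin funrpos_ge0.
- exact: measurable_EFin_funrpos mf.
- exact: measurable_EFin_funrpos mg.
- by move=> x _; rewrite lee_fin le_max2.
Qed.

Lemma pos_integrableD f g : measurable_fun setT f -> measurable_fun setT g ->
  pos_integrable f -> pos_integrable g -> pos_integrable (f \+ g).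
Proof.
move=> mf mg pf pg.
apply: (@pos_integrable_le _ (fun x => f^\+ x + g^\+ x)).
- exact: measurable_funD.
- by apply: measurable_funD; apply: measurable_funrpos.
- by move=> x; rewrite lerD // /funrpos le_max lexx.
apply: ge0_pos_integrable; first by move=> x; rewrite addr_ge0 ?funrpos_ge0.
under eq_integral do rewrite EFinD.
rewrite ge0_integralD //; first exact: lte_add_pinfty.
- by move=> x _; rewrite lee_fin funrpos_ge0.
- exact: measurable_EFin_funrpos.
- by move=> x _; rewrite lee_fin funrpos_ge0.
- exact: measurable_EFin_funrpos.
Qed.

Lemma pos_integrable_bounded c f w : 0 <= c -> measurable_fun setT f ->
  measurable_fun setT w -> (forall x, 0 <= w x) -> (\int[mu]_x (w x)%:E < +oo)%E ->
  (forall x, f x <= c * w x) -> pos_integrable f.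
Proof.
move=> c0 mf mw w0 wfin fle.
apply: (@pos_integrable_le _ (fun x => c * w x)) => //.
  by apply: measurable_funM => //; exact: measurable_cst.
apply: ge0_pos_integrable; first by move=> x; rewrite mulr_ge0.
under eq_integral do rewrite EFinM.
rewrite ge0_integralZl_EFin //; last exact/measurable_EFinP.
  by rewrite lte_mul_pinfty.
by move=> x _; rewrite lee_fin.
Qed.

Lemma integralD_pos_integrable f g :
  measurable_fun setT f -> measurable_fun setT g ->
  pos_integrable f -> pos_integrable g ->
  (\int[mu]_x (f x + g x)%:E = \int[mu]_x (f x)%:E + \int[mu]_x (g x)%:E)%E.
Proof.
move=> mf mg pf pg; have mfg := measurable_funD mf mg.
rewrite (integral_funrposneg (f \+ g)) (integral_funrposneg f) (integral_funrposneg g).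
apply: sube_rearrange.
- by apply: integral_ge0 => x _; rewrite lee_fin funrneg_ge0.
- by apply: integral_ge0 => x _; rewrite lee_fin funrneg_ge0.
- by apply: integral_ge0 => x _; rewrite lee_fin funrneg_ge0.
- exact/pos_integrable_fin_num/pos_integrableD.
- exact: pos_integrable_fin_num.
- exact: pos_integrable_fin_num.
have integralD3 (h1 h2 h3 : T -> R) : (forall x, 0 <= h1 x) -> (forall x, 0 <= h2 x) ->
    (forall x, 0 <= h3 x) -> measurable_fun setT h1 -> measurable_fun setT h2 ->
    measurable_fun setT h3 ->
    (\int[mu]_x (h1 x + h2 x + h3 x)%:E =
     \int[mu]_x (h1 x)%:E + \int[mu]_x (h2 x)%:E + \int[mu]_x (h3 x)%:E)%E.
  move=> h10 h20 h30 mh1 mh2 mh3; under eq_integral do rewrite !EFinD.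
  rewrite ge0_integralD ?ge0_integralD //; try by move=> x _; rewrite lee_fin.
  all: try exact/measurable_EFinP.
  - by move=> x _; rewrite lee_fin addr_ge0.
  - exact/measurable_EFinP/measurable_funD.
(* Both sides of (f+g)^+ + f^- + g^- = (f+g)^- + f^+ + g^+ are nonnegative. *)
rewrite -integralD3 ?funrpos_ge0 ?funrneg_ge0 //; try exact: measurable_funrpos;
  try exact: measurable_funrneg.
rewrite -integralD3 ?funrpos_ge0 ?funrneg_ge0 //; try exact: measurable_funrpos;
  try exact: measurable_funrneg.
apply: eq_integral => x _; congr EFin.
have posneg (h : T -> R) : h^\+ x - h^\- x = h x.
  by rewrite -[in RHS](funrposBneg h).
have := posneg (f \+ g); have := posneg f; have := posneg g.
by rewrite [(f \+ g) x]/=; lra.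
Qed.

Section sum.
Variables (I : Type) (P : pred I) (F : I -> T -> R).
Hypotheses (mF : forall i, measurable_fun setT (F i))
  (pF : forall i, pos_integrable (F i)).

Lemma measurable_sum_pred (s : seq I) :
  measurable_fun setT (fun x => \sum_(i <- s | P i) F i x).
Proof.
rewrite (_ : (fun x => _) = fun x => \sum_(i <- s) (if P i then F i x else 0)).
  by apply: measurable_sum => i; case: (P i) => //; exact: measurable_cst.
by apply/funext => x; rewrite big_mkcond.
Qed.

Lemma pos_integrable_sum (s : seq I) :
  pos_integrable (fun x => \sum_(i <- s | P i) F i x).
Proof.
elim: s => [|a s IH].
  rewrite /pos_integrable (_ : _^\+ = fun=> 0); last first.
    by apply/funext => x; rewrite /funrpos big_nil maxxx.
  by rewrite integral0.
rewrite (_ : (fun x => _) = fun x => if P a then F a x + \sum_(i <- s | P i) F i x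
                                      else \sum_(i <- s | P i) F i x); last first.
  by apply/funext => x; rewrite big_cons.
by case: (P a) => //; apply: pos_integrableD => //; exact: measurable_sum_pred.
Qed.

Lemma integral_sum_pos_integrable (s : seq I) :
  (\int[mu]_x (\sum_(i <- s | P i) F i x)%:E =
   \sum_(i <- s | P i) \int[mu]_x (F i x)%:E)%E.
Proof.
elim: s => [|a s IH].
  by rewrite big_nil; under eq_integral do rewrite big_nil; exact: integral0.
rewrite big_cons; under eq_integral do rewrite big_cons.
case: (P a) => //; rewrite integralD_pos_integrable ?IH //.
  exact: measurable_sum_pred.
exact: pos_integrable_sum.
Qed.
End sum.

Lemma integralZl_pos_integrable c f : 0 <= c -> measurable_fun setT f ->
  pos_integrable f ->
  (\int[mu]_x (c * f x)%:E = c%:E * \int[mu]_x (f x)%:E)%E.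
Proof.
move=> c0 mf pf.
rewrite (integral_funrposneg (fun x => c * f x)) (integral_funrposneg f).
rewrite ge0_funrposM // ge0_funrnegM //.
under eq_integral do rewrite EFinM.
under [X in (_ - X)%E]eq_integral do rewrite EFinM.
rewrite !ge0_integralZl_EFin //;
  try by move=> x _; rewrite lee_fin ?funrpos_ge0 ?funrneg_ge0.
- by apply/esym/muleBr; last exact: fin_num_adde_defr (pos_integrable_fin_num _ pf).
- exact: measurable_EFin_funrneg.
- exact: measurable_EFin_funrpos.
Qed.

Lemma pos_integrableZl c f : 0 <= c -> measurable_fun setT f ->
  pos_integrable f -> pos_integrable (fun x => c * f x).
Proof.
move=> c0 mf pf; rewrite /pos_integrable ge0_funrposM //.
under eq_integral do rewrite EFinM.
rewrite ge0_integralZl_EFin //; last exact: measurable_EFin_funrpos.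
  by rewrite lte_mul_pinfty.
by move=> x _; rewrite lee_fin funrpos_ge0.
Qed.
End positive_part_integrable.

Lemma powR_prod (R : realType) (I : Type) (r : seq I) (P : pred I) (F : I -> R) (s : R) :
  (forall i, 0 <= F i) ->
  (\prod_(i <- r | P i) F i) `^ s = \prod_(i <- r | P i) F i `^ s.
Proof.
move=> F0; elim: r => [|a r IH]; first by rewrite !big_nil powR1.
by rewrite !big_cons; case: (P a) => //; rewrite powRM ?IH ?prodr_ge0.
Qed.

Lemma ln_prod (R : realType) (I : Type) (r : seq I) (P : pred I) (F : I -> R) :
  (forall i, P i -> 0 < F i) ->
  ln (\prod_(i <- r | P i) F i) = \sum_(i <- r | P i) ln (F i).
Proof.
move=> F0; elim: r => [|a r IH]; first by rewrite !big_nil ln1.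
rewrite !big_cons; case: ifP => // Pa.
by rewrite lnM ?posrE ?IH ?F0 // prodr_gt0.
Qed.

Section bicm.
Context (R : realType) (m : nat) (X : finType) (d : measure_display)
  (Y : measurableType d) (mu : {measure set Y -> \bar R}) (W : X -> Y -> R)
  (lab : X -> {ffun 'I_m -> bool}) (PB : 'I_m -> bool -> R).
Hypotheses (lab_bij : bijective lab) (W_ge0 : forall x y, 0 <= W x y)
  (measurable_W : forall x, measurable_fun setT (W x))
  (integral_W : forall x, (\int[mu]_y (W x y)%:E = 1)%E)
  (PB_ge0 : forall j b, 0 <= PB j b)
  (PB_sum : forall j, PB j false + PB j true = 1).

Local Notation bj := (bitj lab).
Local Notation PX := (PXbicm lab PB).
Local Notation q := (qj W lab PB).
Local Notation br := (bit_ratio W lab PB).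

Lemma PB_le1 j b : PB j b <= 1.
Proof.
by have := PB_sum j; have := PB_ge0 j false; have := PB_ge0 j true; case: b; lra.
Qed.

Lemma PXbicm_ge0 x : 0 <= PX x.
Proof. exact: prodr_ge0. Qed.

Lemma PXbicmE j x : PX x = PB j (bj j x) * \prod_(k | k != j) PB k (bj k x).
Proof. by rewrite /PXbicm (bigD1 j). Qed.

Lemma PXbicm_gt0_PB j x : 0 < PX x -> 0 < PB j (bj j x).
Proof.
move=> PX_gt0; rewrite lt_def PB_ge0 andbT.
by apply: contraTneq PX_gt0 => PB0; rewrite (PXbicmE j) PB0 mul0r ltxx.
Qed.

Lemma qj_ge0 j b y : 0 <= q j b y.
Proof. by apply: sumr_ge0 => x _; rewrite mulr_ge0 ?PXbicm_ge0. Qed.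

Lemma qj_ge_term j x y : W x y * PX x <= q j (bj j x) y.
Proof.
rewrite /qj (bigD1 x) //= lerDl.
by apply: sumr_ge0 => z _; rewrite mulr_ge0 ?PXbicm_ge0.
Qed.

Lemma measurable_qj j b : measurable_fun setT (q j b).
Proof.
rewrite (_ : q j b = fun y => \sum_(x <- index_enum X | bj j x == b) W x y * PX x) //.
apply: measurable_sum_pred => x.
by apply: measurable_funM => //; exact: measurable_cst.
Qed.

Lemma measurable_bit_ratio j s b : measurable_fun setT (br j s b).
Proof.
have mpow c : measurable_fun setT (fun y => q j c y `^ s).
  exact: measurableT_comp (measurable_powR s) (measurable_qj j c).
have mden : measurable_fun setT (fun y => \sum_(c : bool) q j c y `^ s * PB j c).
  apply: measurable_sum_pred => c.
  by apply: measurable_funM => //; exact: measurable_cst.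
apply: measurableT_comp => //.
rewrite (_ : (fun y => _) =
  fun y => q j b y `^ s * (\sum_(c : bool) q j c y `^ s * PB j c) `^ (-1)).
  exact/measurable_funM/(measurableT_comp (measurable_powR _) mden).
apply/funext => y; rewrite powR_inv1 //.
by apply: sumr_ge0 => c _; rewrite mulr_ge0 ?powR_ge0.
Qed.

Lemma bit_ratio_le j s b y : 0 < PB j b -> br j s b y <= - ln (PB j b).
Proof.
move=> PB_gt0; rewrite /bit_ratio.
have aD : q j b y `^ s * PB j b <= \sum_(c : bool) q j c y `^ s * PB j c.
  rewrite big_bool /=.
  by case: b {PB_gt0}; [rewrite lerDl|rewrite lerDr]; rewrite mulr_ge0 ?powR_ge0.
set a := q j b y `^ s in aD *; set D := \sum_(c : bool) _ in aD *.
have [->|a_gt0] := eqVneq a 0; first by rewrite mul0r ln0 // oppr_ge0 ln_le0 // PB_le1.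
have {a_gt0} a_gt0 : 0 < a by rewrite lt_def a_gt0 powR_ge0.
have D_gt0 : 0 < D by apply: lt_le_trans aD; rewrite mulr_gt0.
rewrite -lnV ?posrE // ler_ln ?posrE ?divr_gt0 ?invr_gt0 //.
by rewrite ler_pdivrMr // mulrC ler_pdivlMr.
Qed.

Lemma sum_prod_label (G : 'I_m -> bool -> R) :
  \sum_x \prod_(j < m) G j (bj j x) = \prod_(j < m) \sum_(c : bool) G j c.
Proof. by rewrite bigA_distr_bigA (reindex lab) //; exact: onW_bij. Qed.

Lemma sum_PXbicm_bit j b : \sum_(x | bj j x == b) PX x = PB j b.
Proof.
pose G k c := if k == j then (c == b)%:R * PB k c else PB k c.
transitivity (\sum_x \prod_(k < m) G k (bj k x)).
  rewrite big_mkcond; apply: eq_bigr => x _; rewrite (bigD1 j) //= {1}/G eqxx (PXbicmE j).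
  rewrite (eq_bigr (fun k => PB k (bj k x))); last by move=> k kj; rewrite /G (negbTE kj).
  by case: eqP; rewrite ?mul1r ?mul0r.
rewrite sum_prod_label (bigD1 j) //= [X in _ * X]big1; last first.
  by move=> k kj; rewrite /G (negbTE kj) big_bool /= addrC PB_sum.
by rewrite mulr1 /G eqxx big_bool /=; case: b {G}; rewrite ?mul1r ?mul0r ?addr0 ?add0r.
Qed.

Lemma sum_bits_powR_gt0 j s y c : 0 < q j c y -> 0 < PB j c ->
  0 < \sum_(c' : bool) q j c' y `^ s * PB j c'.
Proof.
move=> q_gt0 PB_gt0; rewrite (bigD1 c) //=.
apply: (@lt_le_trans _ _ (q j c y `^ s * PB j c)); first by rewrite mulr_gt0 ?powR_gt0.
by rewrite lerDl sumr_ge0 // => c' _; rewrite mulr_ge0 ?powR_ge0.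
Qed.

Lemma ln_qbicm_ratio s x y : 0 < W x y -> 0 < PX x ->
  ln (qbicm W lab PB x y `^ s / \sum_x' qbicm W lab PB x' y `^ s * PX x') =
  \sum_(j < m) br j s (bj j x) y.
Proof.
move=> W_gt0 PX_gt0.
have q_gt0 j : 0 < q j (bj j x) y.
  exact: lt_le_trans (mulr_gt0 W_gt0 PX_gt0) (qj_ge_term j x y).
rewrite /qbicm powR_prod; last by move=> j; exact: qj_ge0.
have -> : \sum_x' (\prod_(j < m) q j (bj j x') y) `^ s * PX x' =
          \prod_(j < m) \sum_(c : bool) q j c y `^ s * PB j c.
  rewrite -sum_prod_label; apply: eq_bigr => x' _.
  by rewrite powR_prod => [|j]; [rewrite -big_split | exact: qj_ge0].
rewrite -prodf_div ln_prod // => j _.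
by rewrite divr_gt0 ?powR_gt0 // (sum_bits_powR_gt0 _ s _ _ (q_gt0 j)) ?PXbicm_gt0_PB.
Qed.

Lemma measurable_W_bit_ratio x j s b :
  measurable_fun setT (fun y => W x y * br j s b y).
Proof. exact/measurable_funM/measurable_bit_ratio. Qed.

Lemma pos_integrable_W_bit_ratio x j s b : 0 < PB j b ->
  pos_integrable mu (fun y => W x y * br j s b y).
Proof.
move=> PB_gt0; apply: (@pos_integrable_bounded _ _ _ _ (- ln (PB j b)) _ (W x)) => //.
- by rewrite oppr_ge0 ln_le0 // PB_le1.
- exact: measurable_W_bit_ratio.
- by rewrite integral_W ltry.
- by move=> y; rewrite mulrC ler_wpM2r // bit_ratio_le.
Qed.

Lemma W_ln_qbicm_ratio s x y : 0 < PX x ->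
  W x y * ln (qbicm W lab PB x y `^ s / \sum_x' qbicm W lab PB x' y `^ s * PX x') =
  \sum_(j < m) W x y * br j s (bj j x) y.
Proof.
move=> PX_gt0; have := W_ge0 x y; rewrite le_eqVlt => /predU1P[<-|W_gt0].
  by rewrite mul0r big1 // => j _; rewrite mul0r.
by rewrite ln_qbicm_ratio // mulr_sumr.
Qed.

Lemma gmi_summand_split s x :
  ((PX x)%:E * \int[mu]_y (W x y * ln (qbicm W lab PB x y `^ s /
      \sum_x' qbicm W lab PB x' y `^ s * PX x'))%:E =
   \sum_(j < m) (PX x)%:E * \int[mu]_y (W x y * br j s (bj j x) y)%:E)%E.
Proof.
have := PXbicm_ge0 x; rewrite le_eqVlt => /predU1P[<-|PX_gt0].
  by rewrite mul0e big1 // => j _; rewrite mul0e.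
under eq_integral do rewrite W_ln_qbicm_ratio //.
have pF j : pos_integrable mu (fun y => W x y * br j s (bj j x) y).
  exact/pos_integrable_W_bit_ratio/PXbicm_gt0_PB.
rewrite -integralZl_pos_integrable ?PXbicm_ge0 //; last 2 first.
- by apply: measurable_sum_pred => j; exact: measurable_W_bit_ratio.
- by apply: pos_integrable_sum => j //; exact: measurable_W_bit_ratio.
under eq_integral do rewrite mulr_sumr.
rewrite integral_sum_pos_integrable => [|j|j].
- apply: eq_bigr => j _.
  by rewrite integralZl_pos_integrable ?PXbicm_ge0 //; exact: measurable_W_bit_ratio.
- exact/measurable_funM/measurable_W_bit_ratio.
- exact/pos_integrableZl/pF/measurable_W_bit_ratio/PXbicm_ge0.
Qed.

Lemma bit_summand_expand s j b :
  ((PB j b)%:E * \int[mu]_y (Pj W lab PB j b y * br j s b y)%:E =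
   \sum_(x | bj j x == b) (PX x)%:E * \int[mu]_y (W x y * br j s b y)%:E)%E.
Proof.
have := PB_ge0 j b; rewrite le_eqVlt => /predU1P[PB0|PB_gt0].
  rewrite -PB0 mul0e big1 // => x /eqP bx.
  by rewrite (PXbicmE j) bx -PB0 mul0r mul0e.
have mF x : measurable_fun setT (fun y => W x y * br j s b y).
  exact: measurable_W_bit_ratio.
have pF x : pos_integrable mu (fun y => W x y * br j s b y).
  exact: pos_integrable_W_bit_ratio.
have PB_neq0 : PB j b != 0 by rewrite gt_eqF.
under eq_integral => y _.
  rewrite (_ : Pj W lab PB j b y * br j s b y =
     (PB j b)^-1 * \sum_(x | bj j x == b) PX x * (W x y * br j s b y)); first over.
  rewrite /Pj sum_PXbicm_bit mulr_suml mulr_sumr; apply: eq_bigr => x _.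
  by field.
have PBV_ge0 : 0 <= (PB j b)^-1 by rewrite invr_ge0 ltW.
rewrite (integralZl_pos_integrable _ _ _ PBV_ge0); last 2 first.
- by apply: measurable_sum_pred => x; exact: measurable_funM.
- apply: pos_integrable_sum => x; first exact: measurable_funM.
  exact/pos_integrableZl/pF/mF/PXbicm_ge0.
rewrite muleA -EFinM mulfV // mul1e integral_sum_pos_integrable => [|x|x].
- apply: eq_bigr => x _.
  by rewrite integralZl_pos_integrable ?PXbicm_ge0.
- exact: measurable_funM.
- exact/pos_integrableZl/pF/mF/PXbicm_ge0.
Qed.

Lemma EBY_bit_ratio s j :
  EBY mu W lab PB j (br j s) = EXY mu W lab PB (fun x y => br j s (bj j x) y).
Proof.
rewrite /EBY /EXY big_bool (bigID (bj j)).
by apply: congr2; rewrite bit_summand_expand;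
  apply: eq_big => [x|x /eqP ->]; rewrite ?eqb_id ?eqbF_neg.
Qed.

Lemma gmi_objE s : gmi_obj mu W lab PB s = bitwise_obj_X mu W lab PB s.
Proof.
rewrite /gmi_obj /bitwise_obj_X /EXY exchange_big.
by apply: eq_bigr => x _; exact: gmi_summand_split.
Qed.

Lemma bitwise_objE s : bitwise_obj mu W lab PB s = bitwise_obj_X mu W lab PB s.
Proof. by apply: eq_bigr => j _; exact: EBY_bit_ratio. Qed.
End bicm.

Theorem theorem1 (R : realType) (m : nat) (X : finType)
    (d : measure_display) (Y : measurableType d)
    (mu : {measure set Y -> \bar R}) (W : X -> Y -> R)
    (lab : X -> {ffun 'I_m -> bool}) (PB : 'I_m -> bool -> R) :
  #|X| = (2 ^ m)%N ->
  bijective lab ->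
  (forall x y, 0 <= W x y) ->
  (forall x, measurable_fun setT (W x)) ->
  (forall x, (\int[mu]_y (W x y)%:E = 1)%E) ->
  (forall j b, 0 <= PB j b) ->
  (forall j, PB j false + PB j true = 1) ->
  R_gmi mu W lab PB =
    ereal_sup [set bitwise_obj mu W lab PB s | s in [set s : R | 0 < s]] /\
  R_gmi mu W lab PB =
    ereal_sup [set bitwise_obj_X mu W lab PB s | s in [set s : R | 0 < s]].
Proof.
(* The cardinality hypothesis is a consequence of the bijectivity of lab. *)
move=> _ lab_bij W_ge0 measurable_W integral_W PB_ge0 PB_sum.
rewrite /R_gmi; split; congr ereal_sup; apply: eq_imagel => s _ /=.
  by rewrite gmi_objE // bitwise_objE.
by rewrite gmi_objE.
Qed.
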